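(* Let $d$ and $k$ be integers with $1\le k\le d-1$, let $\Lambda\subseteq\mathbb{R}^d$ be a $d$-dimensional lattice with $\lambda_d(\Lambda,B^d)\le1$, and write $\lambda_i=\lambda_i(\Lambda,B^d)$ for $i\in\{1,\dots,d\}$. Let \[\alpha=\min_{d-k+1\le i\le d}(\lambda_{d-i+1}\cdots\lambda_d)^{-1/(i-1)},\] and let $q\in\{d-k+1,\dots,d\}$ be an integer with $\alpha=(\lambda_{d-q+1}\cdots\lambda_d)^{-1/(q-1)}$. If $q\ge d-k+2$, then: (i) $1/\lambda_i\le\alpha$ for every $i\in\{d-q+1,\dots,d\}$; (ii) $(\lambda_{d-i+2}\cdots\lambda_d)^{(q-i+1)/(i-2)}\le\lambda_{d-q+1}\cdots\lambda_{d-i+1}$ for every $i\in\{3,\dots,d-k+2\}$.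
   Context: $B^d$ is the closed unit Euclidean ball in $\mathbb{R}^d$ centered at the origin. A $d$-dimensional lattice is the set of all integer linear combinations of $d$ linearly independent vectors of $\mathbb{R}^d$. For a lattice $\Lambda$ and a compact convex body $K$ symmetric about the origin, the $i$th successive minimum is $\lambda_i(\Lambda,K)=\inf\{\lambda\in\mathbb{R}:\dim(\Lambda\cap(\lambda K))\ge i\}$; one has $\lambda_1\le\cdots\le\lambda_d$. *)

From HB Require Import structures.
From mathcomp Require Import all_boot all_order all_algebra.
From mathcomp Require Import all_classical all_reals all_analysis.
Set Implicit Arguments. Unset Strict Implicit. Unset Printing Implicit Defensive.
Import Order.TTheory GRing.Theory Num.Theory.
Local Open Scope classical_set_scope.
Local Open Scope ring_scope.

Definition enorm (R : realType) (d : nat) (v : 'rV[R]_d) : R :=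
  Num.sqrt (\sum_(j < d) (v ord0 j) ^+ 2).

Definition lattice_of (R : realType) (d : nat) (B : 'M[R]_d) : set 'rV[R]_d :=
  [set v | exists z : 'I_d -> int, v = \sum_(i < d) (z i)%:~R *: row i B].

(* i-th successive minimum of L w.r.t. the Euclidean unit ball B^d:
   inf { l > 0 : L ∩ l B^d contains i linearly independent vectors },
   i.e. dim(span(L ∩ l B^d)) >= i.  v ∈ l B^d  iff  |v| <= l. *)
Definition succ_min (R : realType) (d : nat) (L : set 'rV[R]_d) (i : nat) : R :=
  inf [set l : R | 0 < l /\
        exists M : 'M[R]_(i, d), row_free M /\
          forall r : 'I_i, L (row r M) /\ enorm (row r M) <= l].

From HB Require Import structures.
From mathcomp Require Import all_boot all_order all_algebra.
From mathcomp Require Import all_classical all_reals all_analysis.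
From mathcomp Require Import zify lra.
Set Implicit Arguments. Unset Strict Implicit. Unset Printing Implicit Defensive.
Import Order.TTheory GRing.Theory Num.Theory.
Local Open Scope ring_scope.

(* Write x_j = ln lam_j, a nondecreasing sequence (successive minima of a
   lattice are positive and nondecreasing).  Then -ln of
   (lam_(d-i+1) ... lam_d)^(-1/(i-1)) is m_i = (x_(d-i+1) + ... + x_d)/(i-1),
   and q maximizes m_i over d-k+1 <= i <= d.  Comparing m_q with m_(q-1)
   gives x_(d-q+1) >= m_q, hence x_j >= m_q for all j >= d-q+1: this is (i).
   Comparing m_q with m_(d-k+1) and using this lower bound on x_k, ..., x_(d-i+1)
   bounds x_(d-i+2) + ... + x_d by (i-2) m_q, while
   x_(d-q+1) + ... + x_(d-i+1) >= (q-i+1) m_q: this is (ii) after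
   exponentiating. *)

Lemma ler_sum_nat_const (R : numDomainType) (a b : nat) (c : R) (y : nat -> R) :
  (forall j, (a <= j < b)%N -> c <= y j) -> (b - a)%:R * c <= \sum_(a <= j < b) y j.
Proof.
by move=> cy; rewrite mulr_natl -sumr_const_nat; apply: ler_sum_nat.
Qed.

Lemma mean_le_new_term (R : realFieldType) (m : nat) (s y : R) : (0 < m)%N ->
  s / m%:R <= (y + s) / m.+1%:R -> (y + s) / m.+1%:R <= y.
Proof.
move=> m_gt0; have m0 : 0 < m%:R :> R by rewrite ltr0n.
rewrite ler_pdivrMr // mulrAC ler_pdivlMr ?ltr0Sn // => h.
by rewrite ler_pdivrMr ?ltr0Sn // -natr1; nra.
Qed.

Section TailMeans.
Variables (R : realType) (d : nat) (x : nat -> R).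
Hypothesis x_nondecr : forall a b, (1 <= a)%N -> (a <= b <= d)%N -> x a <= x b.

(* Divided by [i - 1], not [i]: for [x = ln \o lam] this is minus the logarithm
   of the paper's [(lam_(d-i+1) ... lam_d)^(-1/(i-1))]. *)
Definition tail_mean (i : nat) : R := (\sum_(d.+1 - i <= j < d.+1) x j) / i.-1%:R.

Lemma tail_mean_le_head q : (3 <= q <= d)%N ->
  tail_mean q.-1 <= tail_mean q -> tail_mean q <= x (d.+1 - q).
Proof.
move=> q_bnd; rewrite /tail_mean (@big_ltn _ _ _ (d.+1 - q)); last by lia.
have -> : (d.+1 - q.-1 = (d.+1 - q).+1)%N by lia.
have -> : q.-1 = (q.-2).+1 by lia.
by apply: mean_le_new_term; lia.
Qed.

Lemma tail_mean_le q i : (3 <= q <= d)%N -> tail_mean q.-1 <= tail_mean q ->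
  (d.+1 - q <= i <= d)%N -> tail_mean q <= x i.
Proof.
move=> q_bnd qmax i_bnd; apply: (le_trans (tail_mean_le_head q_bnd qmax)).
by apply: x_nondecr; lia.
Qed.

Lemma tail_sum_le k q i :
  (1 <= k)%N -> (d.+2 - k <= q <= d)%N -> (3 <= i <= d.+2 - k)%N ->
  tail_mean (d.+1 - k) <= tail_mean q -> tail_mean q.-1 <= tail_mean q ->
  (\sum_(d.+2 - i <= j < d.+1) x j) * ((q.+1 - i)%:R / (i - 2)%:R)
    <= \sum_(d.+1 - q <= j < d.+2 - i) x j.
Proof.
move=> k_ge1 q_bnd i_bnd kmax qmax.
set g := tail_mean q; set t := (d.+2 - i)%N.
have x_ge j : (d.+1 - q <= j <= d)%N -> g <= x j.
  by move=> j_bnd; apply: tail_mean_le => //; lia.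
have sum_kt : (t - k)%:R * g <= \sum_(k <= j < t) x j.
  by apply: ler_sum_nat_const => j j_bnd; apply: x_ge; lia.
have sum_pt : (t - (d.+1 - q))%:R * g <= \sum_(d.+1 - q <= j < t) x j.
  by apply: ler_sum_nat_const => j j_bnd; apply: x_ge; lia.
have sum_kd : \sum_(k <= j < d.+1) x j <= (d - k)%:R * g.
  move: kmax; rewrite /tail_mean.
  have -> : (d.+1 - (d.+1 - k) = k)%N by lia.
  have -> : (d.+1 - k).-1 = (d - k)%N by lia.
  by rewrite ler_pdivrMr ?ltr0n; [rewrite mulrC | lia].
have sum_td : \sum_(t <= j < d.+1) x j <= (i - 2)%:R * g.
  move: sum_kd; rewrite (big_cat_nat _ (n := t)) /=; [|lia|lia].
  have -> : (d - k = (t - k) + (i - 2))%N by lia.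
  by rewrite natrD mulrDl; lra.
have i2_gt0 : 0 < (i - 2)%:R :> R by rewrite ltr0n; lia.
apply: le_trans (ler_wpM2r _ sum_td) _; first by rewrite divr_ge0.
rewrite mulrC mulrA divfK ?gt_eqF //.
by have -> : (q.+1 - i = t - (d.+1 - q))%N by lia.
Qed.

End TailMeans.

Lemma ln_prod (R : realType) (s : seq nat) (F : nat -> R) :
  {in s, forall j, 0 < F j} -> ln (\prod_(j <- s) F j) = \sum_(j <- s) ln (F j).
Proof.
elim: s => [|j s IH] F_gt0; first by rewrite !big_nil ln1.
have F_gt0' : {in s, forall i, 0 < F i} by move=> i si; apply: F_gt0; rewrite inE si orbT.
rewrite !big_cons lnM ?IH ?posrE //; first by apply: F_gt0; rewrite inE eqxx.
by rewrite big_seq; apply: prodr_gt0.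
Qed.

Section TailRoots.
Variables (R : realType) (d : nat) (lam : nat -> R).
Hypothesis lam_gt0 : forall j, (1 <= j <= d)%N -> 0 < lam j.
Hypothesis lam_nondecr : forall a b, (1 <= a)%N -> (a <= b <= d)%N -> lam a <= lam b.

Definition tail_root (i : nat) : R :=
  (\prod_(d.+1 - i <= j < d.+1) lam j) `^ (- (i.-1%:R)^-1).

Let ln_lam j := ln (lam j).

Lemma ln_nondecr a b : (1 <= a)%N -> (a <= b <= d)%N -> ln (lam a) <= ln (lam b).
Proof. by move=> a_ge1 ab; rewrite ler_ln ?posrE ?lam_nondecr ?lam_gt0 //; lia. Qed.

Lemma prod_lam_gt0 a b : (1 <= a)%N -> (b <= d.+1)%N -> 0 < \prod_(a <= j < b) lam j.
Proof.
move=> a_ge1 b_le; rewrite big_seq; apply: prodr_gt0 => j.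
by rewrite mem_index_iota => j_bnd; apply: lam_gt0; lia.
Qed.

Lemma ln_prod_lam a b : (1 <= a)%N -> (b <= d.+1)%N ->
  ln (\prod_(a <= j < b) lam j) = \sum_(a <= j < b) ln (lam j).
Proof.
move=> a_ge1 b_le; apply: ln_prod => j.
by rewrite mem_index_iota => j_bnd; apply: lam_gt0; lia.
Qed.

Lemma ln_tail_root i : (i <= d)%N -> ln (tail_root i) = - tail_mean d ln_lam i.
Proof.
move=> i_le; rewrite /tail_root ln_powR ln_prod_lam //; last by lia.
by rewrite mulNr mulrC.
Qed.

Lemma ler_tail_root i j : (i <= d)%N -> (j <= d)%N ->
  (tail_root i <= tail_root j) = (tail_mean d ln_lam j <= tail_mean d ln_lam i).
Proof.
move=> i_le j_le.
rewrite -ler_ln ?posrE ?powR_gt0 ?prod_lam_gt0 //; try lia.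
by rewrite !ln_tail_root // lerN2.
Qed.

Lemma inv_le_tail_root q i : (3 <= q <= d)%N -> tail_root q <= tail_root q.-1 ->
  (d.+1 - q <= i <= d)%N -> (lam i)^-1 <= tail_root q.
Proof.
move=> q_bnd qmax i_bnd; have lam_i_gt0 : 0 < lam i by apply: lam_gt0; lia.
rewrite -ler_ln ?posrE ?invr_gt0 ?powR_gt0 ?prod_lam_gt0 //; try lia.
rewrite lnV ?posrE // ln_tail_root ?lerN2; last by lia.
apply: (tail_mean_le ln_nondecr q_bnd _ i_bnd).
by rewrite -ler_tail_root //; lia.
Qed.

Lemma tail_prod_powR_le k q i :
  (1 <= k)%N -> (d.+2 - k <= q <= d)%N -> (3 <= i <= d.+2 - k)%N ->
  tail_root q <= tail_root (d.+1 - k) -> tail_root q <= tail_root q.-1 ->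
  (\prod_(d.+2 - i <= j < d.+1) lam j) `^ ((q.+1 - i)%:R / (i - 2)%:R)
    <= \prod_(d.+1 - q <= j < d.+2 - i) lam j.
Proof.
move=> k_ge1 q_bnd i_bnd kmax qmax.
rewrite -ler_ln ?posrE ?powR_gt0 ?prod_lam_gt0 //; try lia.
rewrite ln_powR !ln_prod_lam; try lia.
rewrite mulrC; apply: (tail_sum_le ln_nondecr k_ge1 q_bnd i_bnd).
all: by rewrite -ler_tail_root //; lia.
Qed.

End TailRoots.

Lemma enorm_ge0 (R : realType) n (v : 'rV[R]_n) : 0 <= enorm v.
Proof. exact: sqrtr_ge0. Qed.

Lemma normr_coord_le_enorm (R : realType) n (v : 'rV[R]_n) j : `|v 0 j| <= enorm v.
Proof.
rewrite /enorm -sqrtr_sqr; apply: ler_wsqrtr.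
by rewrite (bigD1 j) //= lerDl; apply: sumr_ge0 => i _; apply: sqr_ge0.
Qed.

Lemma row_free_rowsub_widen (F : fieldType) m n p (mn : (m <= n)%N) (A : 'M[F]_(n, p)) :
  row_free A -> row_free (rowsub (widen_ord mn) A).
Proof.
move=> A_free; rewrite /row_free rowsubE mxrankMfree //.
have -> : rowsub (widen_ord mn) 1%:M = pid_mx m :> 'M[F]_(m, n).
  by apply/matrixP => r c; rewrite !mxE ltn_ord andbT.
by rewrite rank_pid_mx.
Qed.

Lemma row_free_row_neq0 (F : fieldType) m n (M : 'M[F]_(m, n)) r :
  row_free M -> row r M != 0.
Proof.
move=> M_free; rewrite rowE mulmx_free_eq0 //.
by apply/eqP => /matrixP/(_ 0 r)/eqP; rewrite !mxE !eqxx oner_eq0.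
Qed.

Section SuccessiveMinima.
Local Open Scope classical_set_scope.
Variables (R : realType) (d : nat).

Definition succ_min_set (L : set 'rV[R]_d) (i : nat) : set R :=
  [set l : R | 0 < l /\
     exists M : 'M[R]_(i, d), row_free M /\
       forall r : 'I_i, L (row r M) /\ enorm (row r M) <= l].

Lemma succ_minE L i : succ_min L i = inf (succ_min_set L i).
Proof. by []. Qed.

Lemma succ_min_set_subset L i j : (i <= j)%N -> succ_min_set L j `<=` succ_min_set L i.
Proof.
move=> ij l [l_gt0 [M [M_free M_short]]]; split => //.
exists (rowsub (widen_ord ij) M); split; first exact: row_free_rowsub_widen.
by move=> r; rewrite row_rowsub; apply: M_short.
Qed.

Lemma le_succ_min L i j : (i <= j)%N -> succ_min_set L j !=set0 ->
  succ_min L i <= succ_min L j.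
Proof.
move=> ij Sj_neq0; rewrite !succ_minE; apply: lb_le_inf => // l Sj_l.
apply: ge_inf; last exact: succ_min_set_subset Sj_l.
by exists 0 => y [y_gt0 _]; apply: ltW.
Qed.

Variable B : 'M[R]_d.
Hypothesis B_unit : B \in unitmx.

Lemma lattice_of_row r : lattice_of B (row r B).
Proof.
exists (fun i => (i == r)%:Z); rewrite (bigD1 r) //= big1 ?eqxx ?scale1r ?addr0 //.
by move=> i /negbTE ->; rewrite scale0r.
Qed.

Lemma succ_min_set_neq0 i : (i <= d)%N -> succ_min_set (lattice_of B) i !=set0.
Proof.
move=> i_le; suff [l Sd_l] : succ_min_set (lattice_of B) d !=set0.
  by exists l; apply: succ_min_set_subset Sd_l.
have norms_ge0 : 0 <= \sum_r enorm (row r B) by apply: sumr_ge0 => r _; apply: enorm_ge0.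
exists (1 + \sum_r enorm (row r B)); split; first by rewrite ltr_pwDl.
exists B; split; first by rewrite row_free_unit.
move=> r; split; first exact: lattice_of_row.
rewrite (bigD1 r) //= addrCA lerDl addr_ge0 //.
by apply: sumr_ge0 => s _; apply: enorm_ge0.
Qed.

(* Coordinates in the basis [B] are the integers [v *m invmx B], and a nonzero
   integer is at least [1] in absolute value. *)
Lemma lattice_enorm_lb : exists2 c : R, 0 < c &
  forall v, lattice_of B v -> v != 0 -> c <= enorm v.
Proof.
set C := 1 + \sum_i \sum_j `|invmx B j i|.
have C_gt0 : 0 < C by rewrite ltr_pwDl // sumr_ge0 // => i _; rewrite sumr_ge0.
exists C^-1; first by rewrite invr_gt0.
move=> _ [z ->]; set zr := \row_i ((z i)%:~R : R).
have -> : \sum_(i < d) (z i)%:~R *: row i B = zr *m B.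
  by rewrite mulmx_sum_row; apply: eq_bigr => i _; rewrite mxE.
move=> v_neq0; have [i zi_neq0] : exists i, zr 0 i != 0.
  apply/existsP; apply: contraR v_neq0 => /existsPn zr0.
  suff -> : zr = 0 by rewrite mul0mx.
  by apply/rowP => j; move/negPn/eqP: (zr0 j) => ->; rewrite mxE.
have zi_ge1 : 1 <= `|zr 0 i|.
  by move: zi_neq0; rewrite mxE -intr_norm ler1z intr_eq0 -normr_gt0.
rewrite -[C^-1]mul1r ler_pdivrMr //; apply: (le_trans zi_ge1).
rewrite -{1}[zr](mulmxK B_unit) mxE; apply: (le_trans (ler_norm_sum _ _ _)).
apply: (@le_trans _ _ (\sum_j enorm (zr *m B) * `|invmx B j i|)).
  apply: ler_sum => j _; rewrite normrM ler_wpM2r //.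
  exact: normr_coord_le_enorm.
rewrite -mulr_sumr; apply: ler_wpM2l; first exact: enorm_ge0.
rewrite /C [X in _ <= 1 + X](bigD1 i) //= addrCA lerDl.
by rewrite addr_ge0 // sumr_ge0 // => ? _; rewrite sumr_ge0.
Qed.

Lemma succ_min_gt0 i : (1 <= i <= d)%N -> 0 < succ_min (lattice_of B) i.
Proof.
move=> /andP[i_ge1 i_le]; have [c c_gt0 c_lb] := lattice_enorm_lb.
rewrite succ_minE; apply: (lt_le_trans c_gt0); apply: lb_le_inf.
  exact: succ_min_set_neq0.
move=> l [_ [M [M_free M_short]]]; have [Lr Nr] := M_short (Ordinal i_ge1).
exact: le_trans (c_lb _ Lr (row_free_row_neq0 _ M_free)) Nr.
Qed.

Lemma succ_min_nondecr a b : (a <= b <= d)%N ->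
  succ_min (lattice_of B) a <= succ_min (lattice_of B) b.
Proof. by move=> /andP[ab b_le]; apply: le_succ_min ab (succ_min_set_neq0 b_le). Qed.

End SuccessiveMinima.

Theorem lemma2 (R : realType) (d k : nat) (B : 'M[R]_d) (q : nat) :
  (1 <= k)%N -> (k <= d - 1)%N ->
  B \in unitmx ->
  succ_min (lattice_of B) d <= 1 ->
  let lam := succ_min (lattice_of B) in
  let f := fun i : nat =>
    (\prod_(d.+1 - i <= j < d.+1) lam j) `^ (- (i.-1%:R)^-1) in
  (d.+1 - k <= q <= d)%N ->
  (* alpha = min_{d-k+1 <= i <= d} f i, and alpha = f q *)
  (forall i : nat, (d.+1 - k <= i <= d)%N -> f q <= f i) ->
  let alpha := f q in
  (d.+2 - k <= q)%N ->
  (forall i : nat, (d.+1 - q <= i <= d)%N -> (lam i)^-1 <= alpha) /\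
  (forall i : nat, (3 <= i <= d.+2 - k)%N ->
     (\prod_(d.+2 - i <= j < d.+1) lam j) `^ ((q.+1 - i)%:R / (i - 2)%:R)
     <= \prod_(d.+1 - q <= j < d.+2 - i) lam j).
Proof.
move=> k_ge1 k_le B_unit _ lam f /andP[_ q_le] q_min alpha q_ge.
have q_bnd : (d.+2 - k <= q <= d)%N by rewrite q_ge q_le.
have lam_gt0 := succ_min_gt0 B_unit.
have lam_nondecr a b : (1 <= a)%N -> (a <= b <= d)%N -> lam a <= lam b.
  by move=> _; apply: succ_min_nondecr.
have min_at_k : f q <= f (d.+1 - k)%N by apply: q_min; lia.
have min_at_pred : f q <= f q.-1 by apply: q_min; lia.
split => i i_bnd.
- have q3_bnd : (3 <= q <= d)%N by lia.
  exact: (inv_le_tail_root lam_gt0 lam_nondecr q3_bnd min_at_pred i_bnd).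
- exact: (tail_prod_powR_le lam_gt0 lam_nondecr k_ge1 q_bnd i_bnd min_at_k min_at_pred).
Qed.
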